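(* Let $n\in\{3,4\}$, let $S$ be an $n\times n$ magic square, and let $S'$ be any arrangement obtained from $S$ by interchanging the entries of two distinct cells. Then $E_{\mathrm{full}}(S')>E_{\mathrm{full}}(S)=0$, where \[ E_{\mathrm{full}}(T)=\sum_{k=0}^{n-2}\mathrm{Cov}(R_k,Z_T)^2+\sum_{\ell=0}^{n-2}\mathrm{Cov}(C_\ell,Z_T)^2+\mathrm{Cov}(D_{\mathrm{main}},Z_T)^2+\mathrm{Cov}(D_{\mathrm{anti}},Z_T)^2 \] for an arrangement $T=(t_{ij})$ with $Z_T(i,j)=t_{ij}-\frac{n^2+1}{2}$.
   Context: An arrangement is a bijection $(i,j)\mapsto t_{ij}$ from $\{0,\dots,n-1\}^2$ to $\{1,\dots,n^2\}$; it is a magic square if all rows, columns and both main diagonals sum to $n(n^2+1)/2$. $R_k(i,j)=1$ if $i=k$ else $0$; $C_\ell(i,j)=1$ if $j=\ell$ else $0$; $D_{\mathrm{main}}(i,j)=1$ if $i=j$ else $0$; $D_{\mathrm{anti}}(i,j)=1$ if $i+j=n-1$ else $0$. Functions on the grid are random variables under the uniform distribution on cells, with $\mathrm{Cov}(F,G)=\frac1{n^2}\sum_{i,j}(F(i,j)-\bar F)(G(i,j)-\bar G)$. *)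

From mathcomp Require Import all_boot all_order all_algebra.
Set Implicit Arguments. Unset Strict Implicit. Unset Printing Implicit Defensive.
Import Order.TTheory GRing.Theory Num.Theory.
Local Open Scope ring_scope.

Definition cell (n : nat) := ('I_n * 'I_n)%type.

(* an arrangement: a bijection from the cells onto {1,...,n^2};
   written out as: injective with values in {1,...,n^2} (the two sets have
   the same cardinality n^2). *)
Definition arrangement (n : nat) (t : cell n -> nat) : Prop :=
  injective t /\ (forall c, (1 <= t c <= n ^ 2)%N).

Definition magic_const (n : nat) : nat := (n * (n ^ 2 + 1)) %/ 2.

Definition magic_square (n : nat) (t : cell n -> nat) : Prop :=
  arrangement t /\
  (forall i : 'I_n, (\sum_(j < n) t (i, j))%N = magic_const n) /\
  (forall j : 'I_n, (\sum_(i < n) t (i, j))%N = magic_const n) /\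
  (\sum_(i < n) t (i, i))%N = magic_const n /\
  (\sum_(c : cell n | ((c.1 : nat) + c.2 == n - 1)%N) t c)%N = magic_const n.

Definition swap_cells (n : nat) (c1 c2 : cell n) (t : cell n -> nat) : cell n -> nat :=
  fun c => if c == c1 then t c2 else if c == c2 then t c1 else t c.

Definition mean (n : nat) (F : cell n -> rat) : rat :=
  (n ^ 2)%:R^-1 * \sum_(c : cell n) F c.

Definition cov (n : nat) (F G : cell n -> rat) : rat :=
  (n ^ 2)%:R^-1 * \sum_(c : cell n) (F c - mean F) * (G c - mean G).

Definition Rind (n k : nat) : cell n -> rat :=
  fun c => if (c.1 : nat) == k then 1 else 0.
Definition Cind (n l : nat) : cell n -> rat :=
  fun c => if (c.2 : nat) == l then 1 else 0.
Definition Dmain (n : nat) : cell n -> rat :=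
  fun c => if (c.1 : nat) == c.2 then 1 else 0.
Definition Danti (n : nat) : cell n -> rat :=
  fun c => if (c.1 + c.2 == n - 1)%N then 1 else 0.

Definition Z (n : nat) (t : cell n -> nat) : cell n -> rat :=
  fun c => (t c)%:R - ((n ^ 2 + 1)%:R / 2).

Definition E_full (n : nat) (t : cell n -> nat) : rat :=
  \sum_(k < n.-1) cov (@Rind n k) (Z t) ^+ 2
  + \sum_(l < n.-1) cov (@Cind n l) (Z t) ^+ 2
  + cov (@Dmain n) (Z t) ^+ 2 + cov (@Danti n) (Z t) ^+ 2.

From mathcomp Require Import all_boot all_order all_algebra.
From mathcomp Require Import ring lra zify.
Set Implicit Arguments.
Unset Strict Implicit.
Unset Printing Implicit Defensive.
Import Order.TTheory GRing.Theory Num.Theory.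
Local Open Scope ring_scope.

(* Along every line of a magic square the entries sum to n (n^2 + 1) / 2, so
   the centred square Z_S sums to zero along every row, column and diagonal.
   As Z_S also has mean zero, Cov(F, Z_S) = n^-2 * sum_c F c * Z_S c, which
   vanishes for every line indicator F; hence E_full(S) = 0.  Interchanging
   the entries of c1 and c2 adds d * (delta_c1 - delta_c2) to Z, where
   d = t_c2 - t_c1 <> 0, so Cov(F, Z_S') = n^-2 * d * (F c1 - F c2).  Two
   distinct cells lie in different rows or in different columns, and of two
   distinct indices at least one is below n - 1, so some row or column
   indicator occurring in E_full separates c1 from c2. *)

Section CellSums.
Variables (R : Type) (idx : R) (op : Monoid.com_law idx) (n : nat).

Lemma big_cell_row (P : pred 'I_n) (G : cell n -> R) :
  \big[op/idx]_(c : cell n | P c.1) G c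
  = \big[op/idx]_(i < n | P i) \big[op/idx]_(j < n) G (i, j).
Proof. by rewrite pair_big_dep; apply: eq_big => -[i j] //=; rewrite andbT. Qed.

Lemma big_cell_col (P : pred 'I_n) (G : cell n -> R) :
  \big[op/idx]_(c : cell n | P c.2) G c
  = \big[op/idx]_(j < n | P j) \big[op/idx]_(i < n) G (i, j).
Proof. by rewrite exchange_big pair_big_dep; apply: eq_big => -[i j]. Qed.

Lemma big_cell_graph (g : 'I_n -> 'I_n) (G : cell n -> R) :
  \big[op/idx]_(c : cell n | c.2 == g c.1) G c
  = \big[op/idx]_(i < n) G (i, g i).
Proof.
rewrite -(eq_bigr _ (fun i _ => big_pred1_eq op (g i) (fun j => G (i, j)))).
by rewrite pair_big_dep; apply: eq_big => -[i j].
Qed.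

Lemma big_cell_antidiag (G : cell n -> R) :
  \big[op/idx]_(c : cell n | (c.1 + c.2 == n - 1)%N) G c
  = \big[op/idx]_(i < n) G (i, rev_ord i).
Proof.
rewrite -big_cell_graph; apply: eq_bigl => -[i j] /=; have i_lt := ltn_ord i.
by apply/eqP/eqP => [ij | ->]; [apply: val_inj => /= | rewrite /=]; lia.
Qed.

Lemma big_cell_diag (G : cell n -> R) :
  \big[op/idx]_(c : cell n | (c.1 : nat) == c.2) G c
  = \big[op/idx]_(i < n) G (i, i).
Proof. by rewrite -big_cell_graph; apply: eq_bigl => -[i j]; rewrite eq_sym. Qed.

End CellSums.

Lemma sum_if_mul (R : pzSemiRingType) (T : finType) (P : pred T) (G : T -> R) :
  \sum_(c : T) (if P c then 1 else 0) * G c = \sum_(c | P c) G c.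
Proof.
by rewrite [RHS]big_mkcond; apply: eq_bigr => c _; case: (P c); rewrite ?mul1r ?mul0r.
Qed.

Lemma sum_mul_delta (R : pzSemiRingType) (T : finType) (F : T -> R) (a : T) :
  \sum_c F c * (c == a)%:R = F a.
Proof.
rewrite (bigD1 a) //= eqxx mulr1 big1 ?addr0 // => c /negbTE->.
exact: mulr0.
Qed.

Lemma cov_centered n (F G : cell n -> rat) :
  \sum_c G c = 0 -> cov F G = (n ^ 2)%:R^-1 * \sum_c F c * G c.
Proof.
move=> G0; rewrite /cov /mean G0 mulr0; congr (_ * _).
under eq_bigr do rewrite subr0 mulrBl.
by rewrite sumrB -mulr_sumr G0 mulr0 subr0.
Qed.

Lemma natr_magic_const n :
  (magic_const n)%:R = n%:R * ((n ^ 2 + 1)%:R / 2) :> rat.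
Proof.
have /(congr1 (GRing.natmul (1 : rat))) : (magic_const n * 2 = n * (n ^ 2 + 1))%N.
  by rewrite divnK // dvdn2 oddM oddD oddX; case: (odd n).
by rewrite !natrM mulrA => <-; rewrite mulfK.
Qed.

Lemma sum_Z_line n (t : cell n -> nat) (f : 'I_n -> cell n) :
  (\sum_(i < n) t (f i))%N = magic_const n -> \sum_(i < n) Z t (f i) = 0.
Proof.
by move=> tf; rewrite sumrB -natr_sum tf sumr_const card_ord natr_magic_const; ring.
Qed.

Section MagicSquare.
Variables (n : nat) (S : cell n -> nat).
Hypothesis S_magic : magic_square S.

Lemma sum_Z_row (i : 'I_n) : \sum_(j < n) Z S (i, j) = 0.
Proof. by case: S_magic => _ [rows _]; apply: sum_Z_line. Qed.

Lemma sum_Z_col (j : 'I_n) : \sum_(i < n) Z S (i, j) = 0.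
Proof. by case: S_magic => _ [_ [cols _]]; apply: sum_Z_line. Qed.

Lemma sum_Z_magic : \sum_c Z S c = 0.
Proof.
rewrite (big_cell_row _ predT).
by apply: big1 => i _; apply: sum_Z_row.
Qed.

Lemma sum_Rind_Z (k : nat) : \sum_c @Rind n k c * Z S c = 0.
Proof.
rewrite sum_if_mul (big_cell_row _ (fun i => (i : nat) == k)).
by apply: big1 => i _; apply: sum_Z_row.
Qed.

Lemma sum_Cind_Z (l : nat) : \sum_c @Cind n l c * Z S c = 0.
Proof.
rewrite sum_if_mul (big_cell_col _ (fun j => (j : nat) == l)).
by apply: big1 => j _; apply: sum_Z_col.
Qed.

Lemma sum_Dmain_Z : \sum_c @Dmain n c * Z S c = 0.
Proof.
case: S_magic => _ [_ [_ [diag _]]].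
by rewrite sum_if_mul big_cell_diag; apply: sum_Z_line.
Qed.

Lemma sum_Danti_Z : \sum_c @Danti n c * Z S c = 0.
Proof.
case: S_magic => _ [_ [_ [_ anti]]].
rewrite big_cell_antidiag in anti.
by rewrite sum_if_mul big_cell_antidiag; apply: sum_Z_line.
Qed.

Lemma E_full_magic : E_full S = 0.
Proof.
have cov0 F : \sum_c F c * Z S c = 0 -> cov F (Z S) ^+ 2 = 0.
  by move=> FZ; rewrite cov_centered ?sum_Z_magic // FZ mulr0 expr0n.
rewrite /E_full (cov0 _ sum_Dmain_Z) (cov0 _ sum_Danti_Z) !big1 ?addr0 //.
  by move=> l _; apply/cov0/sum_Cind_Z.
by move=> k _; apply/cov0/sum_Rind_Z.
Qed.

End MagicSquare.

Section SwapCells.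
Variables (n : nat) (t : cell n -> nat) (c1 c2 : cell n).
Hypothesis c12 : c1 != c2.

Let d : rat := (t c2)%:R - (t c1)%:R.

Lemma Z_swap_cells c :
  Z (swap_cells c1 c2 t) c = Z t c + d * ((c == c1)%:R - (c == c2)%:R).
Proof.
rewrite /Z /swap_cells /d.
case: (eqVneq c c1) => [->|_]; first by rewrite (negbTE c12) /=; ring.
by case: (eqVneq c c2) => [->|_] /=; ring.
Qed.

Lemma sum_mul_Z_swap_cells (F : cell n -> rat) :
  \sum_c F c * Z (swap_cells c1 c2 t) c
  = \sum_c F c * Z t c + d * (F c1 - F c2).
Proof.
under eq_bigr do rewrite Z_swap_cells mulrDr.
rewrite big_split /=; congr (_ + _).
by under eq_bigr do rewrite mulrCA mulrBr; rewrite -mulr_sumr sumrB !sum_mul_delta.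
Qed.

Hypotheses (t_inj : injective t) (sum_Z_t : \sum_c Z t c = 0).

Lemma cov_swap_cells_neq0 (F : cell n -> rat) :
  \sum_c F c * Z t c = 0 -> F c1 != F c2 ->
  cov F (Z (swap_cells c1 c2 t)) != 0.
Proof.
move=> FZ F12.
have sum_Z' : \sum_c Z (swap_cells c1 c2 t) c = 0.
  have := sum_mul_Z_swap_cells (fun _ => 1).
  by rewrite -!mulr_sumr !mul1r subrr mulr0 addr0 sum_Z_t.
have n_gt0 : (0 < n)%N by apply: leq_ltn_trans (ltn_ord c1.1).
have t12 : (t c2)%:R != (t c1)%:R :> rat.
  by rewrite eqr_nat; apply: contra c12 => /eqP/t_inj->.
rewrite cov_centered // sum_mul_Z_swap_cells FZ add0r.
by rewrite !mulf_neq0 ?subr_eq0 // invr_eq0 pnatr_eq0 -lt0n expn_gt0 n_gt0.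
Qed.

End SwapCells.

Lemma separating_ord_pred n (i j : 'I_n) :
  i != j -> exists k : 'I_n.-1, ((i : nat) == k) != ((j : nat) == k).
Proof.
move=> ij; have {}ij : ((i : nat) == j) = false by apply/negbTE.
have [i_small | i_last] := ltnP i n.-1.
  by exists (Ordinal i_small); rewrite /= eqxx (eq_sym (j : nat)) ij.
have j_small : (j < n.-1)%N by have := ltn_ord i; have := ltn_ord j; lia.
by exists (Ordinal j_small); rewrite /= eqxx ij.
Qed.

Lemma if_1_0_neq (R : nzRingType) (a b : bool) :
  a != b -> (if a then 1 else 0) != (if b then 1 else 0) :> R.
Proof. by case: a; case: b => //= _; rewrite ?(eq_sym 0) oner_neq0. Qed.

Lemma sum_sqr_gt0 (R : realDomainType) (I : finType) (F : I -> R) (i : I) :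
  F i != 0 -> 0 < \sum_j F j ^+ 2.
Proof.
move=> Fi; have F2_ge0 j : true -> 0 <= F j ^+ 2 by move=> _; apply: sqr_ge0.
rewrite lt0r sumr_ge0 // andbT psumr_neq0 //.
by apply/hasP; exists i; rewrite ?mem_index_enum //= lt0r sqr_ge0 sqrf_eq0 Fi.
Qed.

Lemma E_full_gt0 n (t : cell n -> nat) :
  (exists k : 'I_n.-1, cov (@Rind n k) (Z t) != 0) \/
  (exists l : 'I_n.-1, cov (@Cind n l) (Z t) != 0) -> 0 < E_full t.
Proof.
move=> sep; have sum_sqr_ge0 (G : 'I_n.-1 -> rat) : 0 <= \sum_k G k ^+ 2.
  by apply: sumr_ge0 => k _; apply: sqr_ge0.
have := sum_sqr_ge0 (fun k => cov (@Rind n k) (Z t)).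
have := sum_sqr_ge0 (fun l => cov (@Cind n l) (Z t)).
have := sqr_ge0 (cov (@Dmain n) (Z t)); have := sqr_ge0 (cov (@Danti n) (Z t)).
rewrite /E_full; case: sep => [[k] | [l]].
  by move/(sum_sqr_gt0 (F := fun k : 'I_n.-1 => cov (@Rind n k) (Z t))); lra.
by move/(sum_sqr_gt0 (F := fun l : 'I_n.-1 => cov (@Cind n l) (Z t))); lra.
Qed.

Theorem mainTheorem9 (n : nat) (hn : n = 3%N \/ n = 4%N)
  (S : cell n -> nat) (hS : magic_square S) (c1 c2 : cell n) (hc : c1 != c2) :
  E_full S = 0 /\ E_full S < E_full (swap_cells c1 c2 S).
Proof.
move: c1 c2 hc => [i1 j1] [i2 j2] hc.
have S_inj : injective S by case: hS => -[].
have cov_neq0 := cov_swap_cells_neq0 hc S_inj (sum_Z_magic hS).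
rewrite E_full_magic //; split => //; apply: E_full_gt0.
have [rows_eq | rows_neq] := eqVneq i1 i2.
  have cols_neq : j1 != j2 by apply: contraNneq hc => <-; rewrite rows_eq.
  have [l sep] := separating_ord_pred cols_neq.
  right; exists l; apply: cov_neq0; first exact: (sum_Cind_Z hS).
  exact: if_1_0_neq.
have [k sep] := separating_ord_pred rows_neq.
left; exists k; apply: cov_neq0; first exact: (sum_Rind_Z hS).
exact: if_1_0_neq.
Qed.
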